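(* Let $P^A,P^B,S$ be pairwise disjoint infinite sets of positive integers, each with a fixed enumeration, and for real $x\ge0$ let $P^c_x$ (resp. $S_x$) denote the first $\lfloor x\rfloor$ elements of $P^c$ (resp. $S$). For $c\in\{A,B\}$ and integers $0<k\le t$ define $F^c_{t,k}=P^c_{t/2+1}\cup(S_{t/2}\setminus S_{t-k})$. Then $\{F^c_{t,k}\}$ is an F-system, and for every positive integer $t$, $\left|\bigcup_{c\in\{A,B\}}\bigcup_{0<\kappa\le\tau\le t}F^c_{\tau,\kappa}\right|\le 1.5\,t+2$; in particular it is a $1.5$-competitive F-system.
   Context: F-system: a family $\mathcal F=\{F^c_{t,k}\}$ of sets of positive integers, indexed by $c\in\{A,B\}$ and integers $0<k\le t$, such that (F1) $|F^c_{t,k}|\ge k$ for all $c,t,k$; and (F2) $F^A_{t,k}\cap F^B_{t',k'}=\emptyset$ for all $k\le t$, $k'\le t'$ with $k+k'\le\max(t,t')$. An F-system is $R$-competitive if there is a constant $\lambda$ (independent of $t$) such that for every positive integer $t$, $\left|\bigcup_{c\in\{A,B\}}\bigcup_{0<\kappa\le\tau\le t}F^c_{\tau,\kappa}\right|\le Rt+\lambda$. *)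

From HB Require Import structures.
From mathcomp Require Import all_boot all_order all_algebra.
Set Implicit Arguments. Unset Strict Implicit. Unset Printing Implicit Defensive.
Import Order.TTheory GRing.Theory Num.Theory.

Inductive color := cA | cB.

(* A finite set of positive integers is represented by a list (duplicates
   allowed); its cardinality is the number of distinct entries. *)
Definition card_seq (s : seq nat) : nat := size (undup s).

Definition Fsystem (F : color -> nat -> nat -> seq nat) : Prop :=
  (forall c t k, 0 < k <= t -> all (fun x => 0 < x) (F c t k)) /\
  (forall c t k, 0 < k <= t -> k <= card_seq (F c t k)) /\
  (forall t k t' k', 0 < k <= t -> 0 < k' <= t' -> k + k' <= maxn t t' ->
     forall x, x \in F cA t k -> x \notin F cB t' k').

Definition Funion (F : color -> nat -> nat -> seq nat) (t : nat) : seq nat :=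
  flatten (flatten [seq [seq F c tau kap | kap <- iota 1 tau]
                   | c <- [:: cA; cB], tau <- iota 1 t]).

Definition competitive (F : color -> nat -> nat -> seq nat) (R : rat) : Prop :=
  exists lambda : rat, forall t, 0 < t ->
    ((card_seq (Funion F t))%:R <= R * t%:R + lambda)%R.

(* Enumerations of infinite sets of positive integers: injective maps
   nat -> nat with positive values; element i is the (i+1)-th element. *)
Definition enumeration (p : nat -> nat) : Prop :=
  injective p /\ (forall i, 0 < p i).

Definition firstn (p : nat -> nat) (n : nat) : seq nat := [seq p i | i <- iota 0 n].

(* F^c_{t,k} = P^c_{t/2+1} u (S_{t/2} \ S_{t-k});  floor(t/2+1) = t./2 + 1. *)
Definition Fconstr (pA pB s : nat -> nat) (c : color) (t k : nat) : seq nat :=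
  firstn (if c is cA then pA else pB) (t./2 + 1) ++
  [seq x <- firstn s t./2 | x \notin firstn s (t - k)].

From HB Require Import structures.
From mathcomp Require Import all_boot all_order all_algebra zify ring.
Import Order.TTheory GRing.Theory Num.Theory.

(* Every member of F^c_{t,k} is one of the first t/2 + 1 elements of P^c or
   an element s_j of S with t - k <= j < t/2.  A common S-member s_j of
   F^A_{t,k} and F^B_{t',k'} has t - k, t' - k' <= j < t/2, t'/2, whence
   k + k' > max(t,t').  Within F^c_{t,k} the two parts contribute t/2 + 1 and
   t/2 - (t - k) distinct elements, at least k in all.  Up to time t only the
   first t/2 + 1 elements of P^A and P^B and the first t/2 of S are ever used,
   whence at most 3 (t/2) + 2 <= 1.5 t + 2 elements in total. *)

Lemma card_seq_le_size {s l : seq nat} : {subset s <= l} -> card_seq s <= size l.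
Proof.
by move=> sl; apply: uniq_leq_size (undup_uniq s) _ => x; rewrite mem_undup; apply: sl.
Qed.

Lemma size_le_card_seq {u s : seq nat} : uniq u -> {subset u <= s} -> size u <= card_seq s.
Proof. by move=> uu us; apply: uniq_leq_size uu _ => x /us; rewrite mem_undup. Qed.

Lemma mem_firstnP (p : nat -> nat) n x :
  reflect (exists2 i, i < n & x = p i) (x \in firstn p n).
Proof.
apply: (iffP mapP) => [[i] | [i lt_in ->]].
  by rewrite mem_iota add0n => /andP [_ lt_in] ->; exists i.
by exists i; rewrite // mem_iota add0n lt_in.
Qed.

Lemma size_firstn (p : nat -> nat) n : size (firstn p n) = n.
Proof. by rewrite size_map size_iota. Qed.

Lemma mem_Funion F t x : x \in Funion F t ->
  exists c tau kap, [/\ 0 < kap <= tau, tau <= t & x \in F c tau kap].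
Proof.
rewrite /Funion => /flattenP [l /flattenP [L]].
rewrite /= cats0 mem_cat => inL.
have [c [tau [tau_t ->]]] : exists c tau, tau \in iota 1 t /\
    L = [seq F c tau kap | kap <- iota 1 tau].
  by case/orP: inL => /mapP [tau tau_t ->]; [exists cA | exists cB]; exists tau.
move=> /mapP [kap kap_tau ->] xF; exists c, tau, kap.
by move: tau_t kap_tau; rewrite !mem_iota; split=> //; lia.
Qed.

Section Construction.

Variables pA pB s : nat -> nat.
Hypothesis inj_s : injective s.

Definition pcol (c : color) : nat -> nat := if c is cA then pA else pB.

Lemma mem_Fconstr {c t k x} : x \in Fconstr pA pB s c t k ->
  (exists2 i, i <= t./2 & x = pcol c i) \/
  (exists2 j, t - k <= j < t./2 & x = s j).
Proof.
rewrite mem_cat => /orP [/mem_firstnP [i lt_i ->] | ].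
  by left; exists i => //; lia.
rewrite mem_filter => /andP [notS /mem_firstnP [j lt_j x_sj]].
right; exists j => //; rewrite lt_j andbT leqNgt.
by apply: contraNN notS => lt_j'; apply/mem_firstnP; exists j.
Qed.

Lemma Fconstr_pos c t k :
  (forall i, 0 < pA i) -> (forall i, 0 < pB i) -> (forall j, 0 < s j) ->
  all (fun x => 0 < x) (Fconstr pA pB s c t k).
Proof.
move=> posA posB posS; apply/allP => x /mem_Fconstr [[i _ ->] | [j _ ->]] //.
by case: c.
Qed.

Lemma card_Fconstr c t k : injective (pcol c) -> (forall i j, pcol c i <> s j) ->
  k <= t -> k <= card_seq (Fconstr pA pB s c t k).
Proof.
move=> inj_p disj_ps le_kt.
pose newS := [seq s j | j <- iota (t - k) (t./2 - (t - k))].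
apply: (@leq_trans (size (firstn (pcol c) (t./2 + 1) ++ newS))).
  by rewrite size_cat size_firstn size_map size_iota; have := odd_double_half t; lia.
apply: size_le_card_seq => [|x].
  rewrite cat_uniq !map_inj_uniq ?iota_uniq //= andbT.
  by apply/hasPn => _ /mapP [j _ ->]; apply/negP => /mem_firstnP [i _ /esym]; apply: disj_ps.
rewrite /Fconstr -/(pcol c) !mem_cat => /orP [-> // | /mapP [j]].
rewrite mem_iota => j_range ->; rewrite mem_filter; apply/orP; right.
apply/andP; split; last by apply/mem_firstnP; exists j => //; lia.
by apply/negP => /mem_firstnP [i lt_i /inj_s eq_ji]; lia.
Qed.

Lemma Fconstr_disjoint t k t' k' :
  (forall i j, pA i <> pB j) -> (forall i j, pA i <> s j) ->
  (forall i j, pB i <> s j) ->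
  k + k' <= maxn t t' ->
  forall x, x \in Fconstr pA pB s cA t k -> x \notin Fconstr pA pB s cB t' k'.
Proof.
move=> dAB dAs dBs kk_max x xA; apply/negP => xB.
case: (mem_Fconstr xA) => [[i _ ->] | [j j_range ->]] in xB *;
case: (mem_Fconstr xB) => [[i' _] | [j' j_range']].
- exact: dAB.
- exact: dAs.
- by move/esym; apply: dBs.
by move/inj_s=> eq_jj; have := odd_double_half t; have := odd_double_half t'; lia.
Qed.

Lemma card_Funion_Fconstr t :
  card_seq (Funion (Fconstr pA pB s) t) <= 3 * t./2 + 2.
Proof.
have used : {subset Funion (Fconstr pA pB s) t <=
    firstn pA (t./2 + 1) ++ firstn pB (t./2 + 1) ++ firstn s t./2}.
  move=> x /mem_Funion [c [tau [kap [_ tau_t xF]]]].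
  have half_tau : tau./2 <= t./2 by apply: half_leq.
  rewrite !mem_cat; case: (mem_Fconstr xF) => [[i lt_i ->] | [j j_range ->]].
    have lt_i' : i < t./2 + 1 by lia.
    by case: c {xF}; [apply/or3P/Or31 | apply/or3P/Or32];
      apply/mem_firstnP; exists i.
  by apply/or3P/Or33/mem_firstnP; exists j => //; lia.
by have := card_seq_le_size used; rewrite !size_cat !size_firstn; lia.
Qed.

End Construction.

Lemma three_halves_bound t :
  ((3 * t./2 + 2)%:R <= (3%:R / 2%:R) * t%:R + 2%:R :> rat)%R.
Proof.
have -> : ((3%:R / 2%:R) * t%:R + 2%:R = (3 * t + 4)%:R / 2%:R :> rat)%R.
  by rewrite natrD natrM; field.
by rewrite ler_pdivlMr ?ltr0n // -natrM ler_nat; have := odd_double_half t; lia.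
Qed.

Theorem mainTheorem3 (pA pB s : nat -> nat) :
  enumeration pA -> enumeration pB -> enumeration s ->
  (forall i j, pA i <> pB j) -> (forall i j, pA i <> s j) ->
  (forall i j, pB i <> s j) ->
  Fsystem (Fconstr pA pB s) /\
  (forall t, 0 < t ->
     ((card_seq (Funion (Fconstr pA pB s) t))%:R
        <= (3%:R / 2%:R) * t%:R + 2%:R :> rat)%R) /\
  competitive (Fconstr pA pB s) (3%:R / 2%:R).
Proof.
move=> [injA posA] [injB posB] [inj_s posS] dAB dAs dBs.
have bound t : ((card_seq (Funion (Fconstr pA pB s) t))%:R
    <= (3%:R / 2%:R) * t%:R + 2%:R :> rat)%R.
  by apply: le_trans (three_halves_bound t); rewrite ler_nat card_Funion_Fconstr.
split; last by split=> [t _ | ]; [|exists 2%:R%R => t _]; apply: bound.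
split; [|split].
- by move=> c t k _; apply: Fconstr_pos.
- by move=> [] t k /andP [_ le_kt]; apply: card_Fconstr.
- by move=> t k t' k' _ _; apply: Fconstr_disjoint.
Qed.
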